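(* Consider the disclosure model described in the context. Let $d,d'\in\mathcal{D}$ be distinct policies such that $d$ is more transparent than $d'$. Then $\pi_d(\theta)\ge\pi_{d'}(\theta)$ for all $\theta\in\Theta$.
   Context: Emissions lie in $E=[0,\bar e]$ with $\bar e>0$; types lie in $\Theta=[\underline\theta,\bar\theta]$. The firm's profit is $\tilde\pi(\theta,e,\tilde e)$ with actual emission $e$ and market-perceived emission $\tilde e$; it is strictly increasing in $e$ and strictly decreasing in $\tilde e$. Standing assumptions: $\tilde\pi$ is continuous on $\Theta\times E\times E$ and $C^2$ on its interior; $\pi(\theta,e):=\tilde\pi(\theta,e,e)$ is strictly concave in $e$; and $\pi(\theta,0)<\pi(\theta,\bar e)$ for all $\theta$. A disclosure policy is a function $d:E\to E$, identified with the partition of $E$ into its level sets. An emission level $e$ is belief-compatible under $d$ if $e\ge e'$ for all $e'$ with $d(e')=d(e)$; $\tilde E_d$ is the set of belief-compatible levels. The type-$\theta$ firm chooses $e\in\tilde E_d$ to maximize $\pi(\theta,e)$. $\mathcal{D}$ is the set of policies for which this maximum is attained for all $\theta$. For $d\in\mathcal{D}$, $\pi_d(\theta):=\max_{e\in\tilde E_d}\pi(\theta,e)$, and $\gamma_d(\theta)$ is the lowest maximizer. For distinct $d,d'\in\mathcal{D}$, $d$ is more transparent than $d'$ if the partition associated with $d$ is finer than that of $d'$, i.e., every cell of $d$ is contained in a cell of $d'$. *)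

From Stdlib Require Import Reals.
From Coquelicot Require Import Coquelicot.
Open Scope R_scope.

(* Points of Theta x E x E are encoded as ((theta, e), etilde) : R*R*R. *)
Definition coord (i : nat) (p : R * R * R) : R :=
  match i with
  | O => fst (fst p)
  | S O => snd (fst p)
  | _ => snd p
  end.

Definition set_coord (i : nat) (p : R * R * R) (x : R) : R * R * R :=
  match i with
  | O => ((x, snd (fst p)), snd p)
  | S O => ((fst (fst p), x), snd p)
  | _ => (fst p, x)
  end.

Definition ex_partial (i : nat) (g : R * R * R -> R) (p : R * R * R) : Prop :=
  ex_derive (fun x => g (set_coord i p x)) (coord i p).
Definition partial (i : nat) (g : R * R * R -> R) (p : R * R * R) : R :=
  Derive (fun x => g (set_coord i p x)) (coord i p).

Definition C2_on (U : R * R * R -> Prop) (g : R * R * R -> R) : Prop :=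
  forall p, U p ->
    continuous g p /\
    forall i, (i < 3)%nat ->
      ex_partial i g p /\ continuous (partial i g) p /\
      forall j, (j < 3)%nat ->
        ex_partial j (partial i g) p /\ continuous (partial j (partial i g)) p.

Definition uncurry3 (f : R -> R -> R -> R) (p : R * R * R) : R :=
  f (fst (fst p)) (snd (fst p)) (snd p).

Definition continuous_on_set (D : R * R * R -> Prop) (g : R * R * R -> R) : Prop :=
  forall p, D p -> filterlim g (within D (locally p)) (locally (g p)).

Definition inE (ebar e : R) : Prop := 0 <= e <= ebar.
Definition inTheta (thl thh th : R) : Prop := thl <= th <= thh.

Definition pi_of (pit : R -> R -> R -> R) (th e : R) : R := pit th e e.

Record model_assumptions (ebar thl thh : R) (pit : R -> R -> R -> R) : Prop := {
  ma_ebar_pos : 0 < ebar;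
  ma_theta : thl < thh;
  ma_incr_e : forall th e1 e2 et, inTheta thl thh th -> inE ebar e1 -> inE ebar e2 ->
      inE ebar et -> e1 < e2 -> pit th e1 et < pit th e2 et;
  ma_decr_et : forall th e et1 et2, inTheta thl thh th -> inE ebar e -> inE ebar et1 ->
      inE ebar et2 -> et1 < et2 -> pit th e et2 < pit th e et1;
  ma_cont : continuous_on_set
      (fun p => inTheta thl thh (fst (fst p)) /\ inE ebar (snd (fst p)) /\ inE ebar (snd p))
      (uncurry3 pit);
  ma_C2 : C2_on
      (fun p => (thl < fst (fst p) < thh) /\ (0 < snd (fst p) < ebar) /\ (0 < snd p < ebar))
      (uncurry3 pit);
  ma_concave : forall th, inTheta thl thh th ->
      forall x y t, inE ebar x -> inE ebar y -> x <> y -> 0 < t < 1 ->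
        t * pi_of pit th x + (1 - t) * pi_of pit th y
          < pi_of pit th (t * x + (1 - t) * y);
  ma_ends : forall th, inTheta thl thh th -> pi_of pit th 0 < pi_of pit th ebar
}.

Definition is_policy (ebar : R) (d : R -> R) : Prop :=
  forall e, inE ebar e -> inE ebar (d e).

Definition belief_compatible (ebar : R) (d : R -> R) (e : R) : Prop :=
  inE ebar e /\ forall e', inE ebar e' -> d e' = d e -> e' <= e.

Definition in_D (ebar thl thh : R) (pit : R -> R -> R -> R) (d : R -> R) : Prop :=
  forall th, inTheta thl thh th ->
    exists e, belief_compatible ebar d e /\
      forall e', belief_compatible ebar d e' -> pi_of pit th e' <= pi_of pit th e.

(* pi_d(theta) := max_{e in tilde E_d} pi(theta, e)  (the supremum, which is
   attained, hence the max, for d in D). *)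
Definition pi_d (ebar : R) (pit : R -> R -> R -> R) (d : R -> R) (th : R) : R :=
  real (Lub_Rbar (fun v => exists e, belief_compatible ebar d e /\ v = pi_of pit th e)).

Definition finer (ebar : R) (d d' : R -> R) : Prop :=
  forall e1 e2, inE ebar e1 -> inE ebar e2 -> d e1 = d e2 -> d' e1 = d' e2.

Definition distinct_policies (ebar : R) (d d' : R -> R) : Prop :=
  ~ (forall e1 e2, inE ebar e1 -> inE ebar e2 -> (d e1 = d e2 <-> d' e1 = d' e2)).

Definition more_transparent (ebar : R) (d d' : R -> R) : Prop :=
  distinct_policies ebar d d' /\ finer ebar d d'.

(* A finer partition has smaller cells, so a level that is maximal in its
   d'-cell is also maximal in its d-cell: the firm's feasible set only grows
   under the more transparent policy, and so does the maximal profit. *)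
From Stdlib Require Import Reals.
From Coquelicot Require Import Coquelicot.
Open Scope R_scope.

Lemma belief_compatible_finer (ebar : R) (d d' : R -> R) (e : R) :
  finer ebar d d' -> belief_compatible ebar d' e -> belief_compatible ebar d e.
Proof.
  intros Hfin [He Hcell]. split; [exact He|].
  intros e' He' Hde. apply Hcell; [exact He'|].
  apply Hfin; assumption.
Qed.

Lemma pi_d_attained (ebar : R) (pit : R -> R -> R -> R) (d : R -> R) (th e : R) :
  belief_compatible ebar d e ->
  (forall e', belief_compatible ebar d e' -> pi_of pit th e' <= pi_of pit th e) ->
  pi_d ebar pit d th = pi_of pit th e.
Proof.
  intros He Hmax. unfold pi_d.
  rewrite (is_lub_Rbar_unique _ (Finite (pi_of pit th e))); [reflexivity|].
  split.
  - intros v [e' [He' ->]]. apply Hmax, He'.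
  - intros b Hb. apply Hb. exists e. split; [exact He | reflexivity].
Qed.

Lemma pi_d_mono (ebar thl thh : R) (pit : R -> R -> R -> R) (d d' : R -> R) (th : R) :
  in_D ebar thl thh pit d -> in_D ebar thl thh pit d' -> inTheta thl thh th ->
  (forall e, belief_compatible ebar d' e -> belief_compatible ebar d e) ->
  pi_d ebar pit d' th <= pi_d ebar pit d th.
Proof.
  intros HD HD' Hth Hsub.
  destruct (HD th Hth) as [e [He Hmax]].
  destruct (HD' th Hth) as [e' [He' Hmax']].
  rewrite (pi_d_attained _ _ _ _ _ He Hmax), (pi_d_attained _ _ _ _ _ He' Hmax').
  apply Hmax, Hsub, He'.
Qed.

Theorem lemma2 (ebar thl thh : R) (pit : R -> R -> R -> R) (d d' : R -> R) :
  model_assumptions ebar thl thh pit ->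
  is_policy ebar d -> is_policy ebar d' ->
  in_D ebar thl thh pit d -> in_D ebar thl thh pit d' ->
  distinct_policies ebar d d' ->
  more_transparent ebar d d' ->
  forall th, inTheta thl thh th -> pi_d ebar pit d th >= pi_d ebar pit d' th.
Proof.
  intros _ _ _ HD HD' _ [_ Hfin] th Hth.
  apply Rle_ge, (pi_d_mono _ _ _ _ _ _ _ HD HD' Hth).
  intros e. apply belief_compatible_finer, Hfin.
Qed.
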